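(* Let $\varepsilon$ be a formal parameter with $\varepsilon^2=0$, and consider the initial triple $(1+\varepsilon,\,1+\varepsilon,\,1+\varepsilon)$ of solutions of the Shadow Markoff equation $A^2+B^2+C^2=(3-3\varepsilon)ABC$. Then the shadow part of the tree of solutions obtained from this triple by mutations (along the Markoff tree) coincides with the classical Markoff tree: every triple $(a+\alpha\varepsilon,b+\beta\varepsilon,c+\gamma\varepsilon)$ in this tree satisfies $\alpha=a$, $\beta=b$, $\gamma=c$.
   Context: Dual numbers are elements $a+\alpha\varepsilon$ ($a,\alpha\in\mathbb{R}$) with $\varepsilon^2=0$; $\alpha$ is called the shadow (nilpotent) part. The mutation at $A$ sends $(A,B,C)=(a+\alpha\varepsilon,b+\beta\varepsilon,c+\gamma\varepsilon)$ to $(A',B,C)$ with $A'=(B^2+C^2)/A$, i.e., $a'=(b^2+c^2)/a$ and $\alpha'=(-a'\alpha+2b\beta+2c\gamma)/a$; mutations at $B$ and $C$ are defined symmetrically. The classical Markoff tree is the tree of positive integer solutions of $a^2+b^2+c^2=3abc$ obtained from $(1,1,1)$ by the mutations $a\mapsto (b^2+c^2)/a$ (and symmetric ones). *)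

From Stdlib Require Import Reals List.
Open Scope R_scope.

(* A dual number a + alpha*eps (eps^2 = 0) is the pair (a, alpha);
   [re] is the real part, [sh] the shadow (nilpotent) part. *)
Record dual := Dual { re : R; sh : R }.

Record dtriple := DTriple { tA : dual; tB : dual; tC : dual }.

(* A' = (B^2 + C^2)/A in the dual numbers:
   a' = (b^2+c^2)/a,  alpha' = (-a' alpha + 2 b beta + 2 c gamma)/a. *)
Definition dmut (A B C : dual) : dual :=
  let a' := (re B ^ 2 + re C ^ 2) / re A in
  Dual a' ((- a' * sh A + 2 * re B * sh B + 2 * re C * sh C) / re A).

Inductive pos := PA | PB | PC.

Definition mutate (p : pos) (t : dtriple) : dtriple :=
  match p with
  | PA => DTriple (dmut (tA t) (tB t) (tC t)) (tB t) (tC t)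
  | PB => DTriple (tA t) (dmut (tB t) (tA t) (tC t)) (tC t)
  | PC => DTriple (tA t) (tB t) (dmut (tC t) (tA t) (tB t))
  end.

Definition mutate_seq (ps : list pos) (t : dtriple) : dtriple :=
  fold_left (fun acc p => mutate p acc) ps t.

Definition one_eps : dual := Dual 1 1.
Definition init_triple : dtriple := DTriple one_eps one_eps one_eps.

Definition in_shadow_tree (t : dtriple) : Prop :=
  exists ps : list pos, t = mutate_seq ps init_triple.

(* If A, B, C all have shadow part equal to their real part, the mutation gives
   alpha' = (2(b^2 + c^2) - a' a) / a = (b^2 + c^2) / a = a', so A' has the same
   property; positivity of the real parts keeps the divisor a nonzero and is
   preserved as well.  The invariant holds for (1+eps, 1+eps, 1+eps) and hence
   along every sequence of mutations. *)
From Pilot Require Import Defs.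
From Stdlib Require Import Reals List Lra.
Open Scope R_scope.

Definition balanced (d : dual) : Prop := 0 < re d /\ sh d = re d.

Definition balanced_triple (t : dtriple) : Prop :=
  balanced (tA t) /\ balanced (tB t) /\ balanced (tC t).

Lemma dmut_balanced (A B C : dual) :
  balanced A -> balanced B -> balanced C -> balanced (dmut A B C).
Proof.
  destruct A as [a alpha], B as [b beta], C as [c gamma].
  unfold balanced, dmut; simpl.
  intros [Ha ->] [Hb ->] [Hc ->].
  split.
  - apply Rdiv_lt_0_compat; nra.
  - field; lra.
Qed.

Lemma mutate_balanced (p : Defs.pos) (t : dtriple) :
  balanced_triple t -> balanced_triple (mutate p t).
Proof.
  destruct t as [A B C]; unfold balanced_triple; simpl.
  intros (HA & HB & HC).
  destruct p; simpl; (split; [|split]); auto using dmut_balanced.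
Qed.

Lemma mutate_seq_balanced (ps : list Defs.pos) (t : dtriple) :
  balanced_triple t -> balanced_triple (mutate_seq ps t).
Proof.
  revert t; induction ps as [|p ps IH]; intros t Ht; simpl.
  - exact Ht.
  - apply IH, mutate_balanced, Ht.
Qed.

Lemma init_triple_balanced : balanced_triple init_triple.
Proof. unfold balanced_triple, balanced; simpl; lra. Qed.

Theorem lemma4 (t : dtriple) :
  in_shadow_tree t ->
  sh (tA t) = re (tA t) /\ sh (tB t) = re (tB t) /\ sh (tC t) = re (tC t).
Proof.
  intros [ps ->].
  destruct (mutate_seq_balanced ps _ init_triple_balanced)
    as ((_ & HA) & (_ & HB) & (_ & HC)).
  auto.
Qed.
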